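(* Consider the sensor-network Kalman filtering model described in the context, and suppose that the network state process $\{\Xi(k)\}_{k\in\mathbb{N}_0}$ is a time-homogeneous Markov chain with transition probabilities $p_{ij}=\Pr\{\Xi(k+1)=j\mid \Xi(k)=i\}$, $i,j\in\mathbb{B}$, and that the power and bit-rate control laws are of the form $u_m(k)=\kappa_m(\Xi(k),h_1(k),\dots,h_M(k))$, $b_m(k)=\eta_m(\Xi(k),h_1(k),\dots,h_M(k))$ for (possibly nonlinear) mappings $\kappa_m,\eta_m$. For $i\in\mathbb{B}$ let $$\nu_i=\sum_{j\in\mathbb{B}}p_{ij}\Pr\{r(k)=0\mid \Xi(k)=j\},$$ the conditional probability that $C(k)$ does not have full column rank given $\Xi(k-1)=i$. If there exists $\rho\in[0,1)$ such that $$\max_{(i,k)\in\mathbb{B}\times\mathbb{N}_0}\nu_i\,\|A(k)\|^2\le\rho,$$ then the Kalman filter is exponentially bounded, i.e., there exist finite constants $\alpha,\beta$ and $\rho'\in[0,1)$ such that $\mathbf{E}\{\operatorname{tr}P(k\mid k-1)\}\le \alpha\rho'^k+\beta$ for all $k\in\mathbb{N}_0$.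
   Context: System: $x(k+1)=A(k)x(k)+w(k)$, $k\in\mathbb{N}_0$, $x(k)\in\mathbb{R}^n$, with $x(0)\sim\mathcal N(x_0,P_0)$ and $\{w(k)\}$ independent with $w(k)\sim\mathcal N(0,Q(k))$. Sensors $S_1,\dots,S_M$ measure $y_m(k)=C_mx(k)+v_m(k)$, $C_m\in\mathbb{R}^{l_m\times n}$, with $\{v_m(k)\}$ independent, $v_m(k)\sim\mathcal N(0,R_m(k))$, and the noises $w,v_1,\dots,v_M$ and $x(0)$ mutually independent. The sequences $\{A(k)\},\{Q(k)\},\{R_m(k)\}$ are deterministic, bounded and known at the gateway. $\|\cdot\|$ is the spectral norm. Network: a directed tree with vertices $S_0$ (the gateway, root), $S_1,\dots,S_M$; each $S_m$, $m\ge1$, has exactly one outgoing edge $\mathcal E_m=(S_m,\mathrm{parent}(S_m))$, and there is a unique path from $S_m$ to $S_0$, whose set of edges is denoted $\mathrm{edge}(\mathrm{path}(S_m))$. Network delays are neglected. Fading model: a network state process $\Xi(k)\in\mathbb{B}=\{1,\dots,|\mathbb{B}|\}$ (finite). Channel power gains $h_m(k)\ge0$ of links $\mathcal E_m$ have time-homogeneous conditional distributions given the network state, and for $(l,k)\neq(m,\ell)$, $h_l(k)$ and $h_m(\ell)$ are conditionally independent given $\Xi(k)=j,\Xi(\ell)=i$. Link success indicators $\gamma_m(k)\in\{0,1\}$ ($1$ iff transmission over $\mathcal E_m$ at time $k$ succeeds) satisfy $\Pr\{\gamma_m(k)=1\mid h_m(k)=h,u_m(k)=u,b_m(k)=b\}=f_m(hu,b)$,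 where $u_m(k)$ is the transmit power and $b_m(k)$ the bit-rate of $S_m$, and $f_m:\mathbb{R}_{\ge0}\times B\to[0,1]$ is increasing in its first and decreasing in its second argument. Under this model and the stated form of control laws, conditioned on the network states the link success variables $\gamma_m(k)$ are independent across $m$ and across time, with $\phi_{m|j}=\Pr\{\gamma_m(k)=1\mid\Xi(k)=j\}$ independent of $k$; the network, channel and dropout processes are independent of $x(0),w,v_m$. Estimator: $\theta_m(k)=\prod_{\mathcal E_i\in\mathrm{edge}(\mathrm{path}(S_m))}\gamma_i(k)$; $C(k)=[\theta_1(k)C_1;\dots;\theta_M(k)C_M]$ (stacked), $y(k)=[\theta_1(k)y_1(k);\dots;\theta_M(k)y_M(k)]$, $R(k)=\mathrm{diag}(R_1(k),\dots,R_M(k))$. The Kalman filter is $\hat x(k+1|k)=A(k)\hat x(k|k-1)+K(k)(y(k)-C(k)\hat x(k|k-1))$, $P(k+1|k)=A(k)P(k|k-1)A(k)^T+Q(k)-K(k)C(k)P(k|k-1)A(k)^T$, $K(k)=A(k)P(k|k-1)C(k)^T(C(k)P(k|k-1)C(k)^T+R(k))^{-1}$, with $P(0|-1)=P_0$, $\hat x(0|-1)=x_0$. Define $r(k)=1$ if $C(k)$ has full column rank and $r(k)=0$ otherwise. The Kalman filter is called exponentially bounded if there exist finite $\alpha,\beta$ and $\rho\in[0,1)$ with $\mathbf{E}\{\operatorname{tr}P(k|k-1)\}\le\alpha\rho^k+\beta$ for all $k\in\mathbb{N}_0$. *)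

From HB Require Import structures.
From mathcomp Require Import all_boot all_order all_algebra.
From mathcomp Require Import all_classical all_reals all_analysis.
Set Implicit Arguments. Unset Strict Implicit. Unset Printing Implicit Defensive.
Import Order.TTheory GRing.Theory Num.Theory.
Local Open Scope ring_scope.
Local Open Scope classical_set_scope.

Section KF.
Variable R : realType.

Definition vnorm2 (q : nat) (x : 'cV[R]_q) : R := \sum_(j < q) x j 0 ^+ 2.

Definition specnorm (p q : nat) (A : 'M[R]_(p, q)) : R :=
  sup [set Num.sqrt (vnorm2 (A *m x)) | x in [set x : 'cV[R]_q | vnorm2 x = 1]].

Definition psdmx (q : nat) (M : 'M[R]_q) : Prop :=
  M^T = M /\ forall x : 'cV[R]_q, 0 <= (x^T *m M *m x) 0 0.

Definition pdmx (q : nat) (M : 'M[R]_q) : Prop :=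
  M^T = M /\ forall x : 'cV[R]_q, x != 0 -> 0 < (x^T *m M *m x) 0 0.

(** Tree: [par m = Some l] means parent(S_m) = S_l, [None] means the gateway S_0.
    [anc t m] is the node reached from S_m after t edges (None = gateway). *)
Definition anc (M : nat) (par : 'I_M -> option 'I_M) (t : nat) (m : 'I_M)
  : option 'I_M := iter t (fun o => obind par o) (Some m).

Definition is_tree (M : nat) (par : 'I_M -> option 'I_M) : Prop :=
  forall m : 'I_M, anc par M m = None.

(** edges of path(S_m): the edges E_l for the sensors l visited on the path *)
Definition on_path (M : nat) (par : 'I_M -> option 'I_M) (m l : 'I_M) : bool :=
  [exists t : 'I_M.+1, anc par t m == Some l].

Definition theta (M : nat) (par : 'I_M -> option 'I_M) (g : 'I_M -> bool)
  (m : 'I_M) : bool := [forall l : 'I_M, on_path par m l ==> g l].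

Definition Cstack (n M : nat) (l : 'I_M -> nat) (C : forall m : 'I_M, 'M[R]_(l m, n))
  (th : 'I_M -> bool) : 'M[R]_(\sum_(m < M) l m, n) :=
  \mxcol_(m < M) ((th m)%:R *: C m).

Definition Rdiag (M : nat) (l : 'I_M -> nat) (Rm : forall m : 'I_M, 'M[R]_(l m))
  : 'M[R]_(\sum_(m < M) l m) := \mxdiag_(m < M) Rm m.

(** Riccati recursion of the Kalman filter: riccati k = P(k|k-1) *)
Fixpoint riccati (n L : nat) (A Q : nat -> 'M[R]_n) (Cs : nat -> 'M[R]_(L, n))
  (Rs : nat -> 'M[R]_L) (P0 : 'M[R]_n) (k : nat) : 'M[R]_n :=
  match k with
  | 0 => P0
  | k'.+1 =>
    let P := riccati A Q Cs Rs P0 k' in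
    let K := A k' *m P *m (Cs k')^T *m invmx (Cs k' *m P *m (Cs k')^T + Rs k') in
    A k' *m P *m (A k')^T + Q k' - K *m Cs k' *m P *m (A k')^T
  end.

Definition bern (b : bool) (q : R) : R := if b then q else 1 - q.

(** Pr{ r(k) = 0 | Xi(k) = j }: under the conditional law given Xi(k) = j the
    link indicators gamma_m(k) are independent Bernoulli(phi_{m|j}). *)
Definition prob_r0_given (n M : nat) (l : 'I_M -> nat)
  (C : forall m : 'I_M, 'M[R]_(l m, n)) (par : 'I_M -> option 'I_M)
  (B : finType) (phi : 'I_M -> B -> R) (j : B) : R :=
  \sum_(g : {ffun 'I_M -> bool} | \rank (Cstack C (theta par g)) != n)
     \prod_(m < M) bern (g m) (phi m j).

Definition nu (n M : nat) (l : 'I_M -> nat)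
  (C : forall m : 'I_M, 'M[R]_(l m, n)) (par : 'I_M -> option 'I_M)
  (B : finType) (p : B -> B -> R) (phi : 'I_M -> B -> R) (i : B) : R :=
  \sum_(j : B) p i j * prob_r0_given C par phi j.

End KF.

(* Along every realisation the Riccati recursion satisfies two trace bounds:
   tr P(k+1) <= ||A(k)||^2 tr P(k) + tr Q(k) always, and, when C(k) has full
   column rank with left inverse K, tr P(k+1) <= ||A(k)||^2 tr (K R(k) K^T) + tr Q(k),
   because the Kalman gain does at least as well as the unbiased gain K.  So
   tr P(k) <= V(k) for the majorant V(k+1) = c if r(k) = 1 and ||A(k)||^2 V(k) + c
   otherwise, with c uniform over the finitely many link patterns.  Network states
   and link indicators are finite-valued, so expectations are finite sums over
   histories; given the history up to time k-1, r(k) = 0 has probability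
   nu_(Xi(k-1)), whence E V(k+1) <= c + rho E V(k) and E tr P(k) stays below
   a constant (exponential boundedness with alpha = 0). *)

From HB Require Import structures.
From mathcomp Require Import all_boot all_order all_algebra.
From mathcomp Require Import all_classical all_reals all_analysis.
From mathcomp Require Import ring lra.
Import Order.TTheory GRing.Theory Num.Theory.
Local Open Scope ring_scope.
Local Open Scope classical_set_scope.
Set Implicit Arguments. Unset Strict Implicit. Unset Printing Implicit Defensive.

Section SpectralNorm.
Variable R : realType.

Lemma vnorm2_ge0 q (x : 'cV[R]_q) : 0 <= vnorm2 x.
Proof. by apply: sumr_ge0 => j _; rewrite sqr_ge0. Qed.

Lemma vnorm2Z q (a : R) (x : 'cV[R]_q) : vnorm2 (a *: x) = a ^+ 2 * vnorm2 x.
Proof. by rewrite /vnorm2 mulr_sumr; apply: eq_bigr => j _; rewrite mxE exprMn. Qed.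

Lemma vnorm20 q : vnorm2 (0 : 'cV[R]_q) = 0.
Proof. by rewrite /vnorm2 big1 // => j _; rewrite mxE expr0n. Qed.

Lemma vnorm2_delta q (i : 'I_q) : vnorm2 (delta_mx i 0 : 'cV[R]_q) = 1.
Proof.
rewrite /vnorm2 (bigD1 i) //= big1 ?addr0 => [|j ji]; first by rewrite !mxE !eqxx expr1n.
by rewrite !mxE (negPf ji) expr0n.
Qed.

Lemma entry_sqr_le_vnorm2 q (x : 'cV[R]_q) i : x i 0 ^+ 2 <= vnorm2 x.
Proof.
by rewrite /vnorm2 (bigD1 i) //= lerDl; apply: sumr_ge0 => j _; exact: sqr_ge0.
Qed.

Lemma vnorm2_eq0 q (x : 'cV[R]_q) : vnorm2 x = 0 -> x = 0.
Proof.
move=> x0; apply/matrixP => i j; rewrite (ord1 j) mxE.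
apply/eqP; rewrite -sqrf_eq0 eq_le sqr_ge0 andbT -x0.
exact: entry_sqr_le_vnorm2.
Qed.

Lemma vnorm2_mul_unit_le p q (A : 'M[R]_(p, q)) x : vnorm2 x = 1 ->
  vnorm2 (A *m x) <= \sum_i (\sum_j `|A i j|) ^+ 2.
Proof.
move=> x1; apply: ler_sum => i _; rewrite mxE.
rewrite -(real_normK (num_real (\sum_j A i j * x j 0))).
rewrite ler_pXn2r ?nnegrE ?normr_ge0 //; last by apply: sumr_ge0.
apply: le_trans (ler_norm_sum _ _ _) _; apply: ler_sum => j _.
rewrite normrM ler_piMr ?normr_ge0 // -(@ler_pXn2r _ 2) ?nnegrE ?normr_ge0 //.
by rewrite expr1n real_normK ?num_real // -x1 entry_sqr_le_vnorm2.
Qed.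

Lemma specnorm_ubound p q (A : 'M[R]_(p, q)) :
  has_ubound [set Num.sqrt (vnorm2 (A *m x)) | x in [set x | vnorm2 x = 1]].
Proof.
exists (Num.sqrt (\sum_i (\sum_j `|A i j|) ^+ 2)) => _ [x x1 <-].
by rewrite ler_sqrt ?vnorm2_mul_unit_le //; apply: sumr_ge0 => i _; exact: sqr_ge0.
Qed.

Lemma sqrt_vnorm2_le_specnorm p q (A : 'M[R]_(p, q)) x :
  vnorm2 x = 1 -> Num.sqrt (vnorm2 (A *m x)) <= specnorm A.
Proof. by move=> x1; apply: (ub_le_sup (specnorm_ubound A)); exists x. Qed.

Lemma specnorm_ge0 p q (A : 'M[R]_(p, q)) : 0 <= specnorm A.
Proof.
case: q A => [|q] A; last first.
  exact: le_trans (sqrtr_ge0 _) (sqrt_vnorm2_le_specnorm A (vnorm2_delta ord0)).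
rewrite /specnorm.
suff -> : [set Num.sqrt (vnorm2 (A *m x)) | x in [set x : 'cV[R]_0 | vnorm2 x = 1]] = set0.
  by rewrite sup0.
apply/seteqP; split => // y [x + _].
by rewrite /= /vnorm2 big_ord0 => /eqP; rewrite eq_sym oner_eq0.
Qed.

Lemma vnorm2_mul_le p q (A : 'M[R]_(p, q)) x :
  vnorm2 (A *m x) <= specnorm A ^+ 2 * vnorm2 x.
Proof.
have [->|x_neq0] := eqVneq x 0; first by rewrite mulmx0 !vnorm20 mulr0.
have x_gt0 : 0 < vnorm2 x.
  by rewrite lt_def vnorm2_ge0 andbT; apply: contra_neq x_neq0; exact: vnorm2_eq0.
set s := Num.sqrt (vnorm2 x).
have s_gt0 : 0 < s by rewrite sqrtr_gt0.
have s2 : s ^+ 2 = vnorm2 x by rewrite sqr_sqrtr // vnorm2_ge0.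
have u1 : vnorm2 (s^-1 *: x) = 1 by rewrite vnorm2Z exprVn s2 mulVf // gt_eqF.
have := sqrt_vnorm2_le_specnorm A u1.
rewrite -(ler_pXn2r (n := 2)) ?nnegrE ?sqrtr_ge0 ?specnorm_ge0 // sqr_sqrtr ?vnorm2_ge0 //.
by rewrite -scalemxAr vnorm2Z exprVn s2 ler_pdivrMl // mulrC.
Qed.

End SpectralNorm.

Section BilinearForms.
Variable R : realType.

Definition bil q (M : 'M[R]_q) (x y : 'cV[R]_q) : R := (x^T *m M *m y) 0 0.

Definition qf q (M : 'M[R]_q) x := bil M x x.

Lemma bilC q (M : 'M[R]_q) x y : M^T = M -> bil M x y = bil M y x.
Proof.
move=> M_sym; rewrite /bil -[x^T *m M *m y]trmxK [in LHS]mxE.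
by rewrite !trmx_mul trmxK M_sym mulmxA.
Qed.

Lemma bilDl q (M : 'M[R]_q) x y z : bil M (x + y) z = bil M x z + bil M y z.
Proof. by rewrite /bil linearD /= !mulmxDl mxE. Qed.

Lemma bilDr q (M : 'M[R]_q) x y z : bil M x (y + z) = bil M x y + bil M x z.
Proof. by rewrite /bil mulmxDr mxE. Qed.

Lemma bilZl q (M : 'M[R]_q) a x y : bil M (a *: x) y = a * bil M x y.
Proof. by rewrite /bil linearZ /= -!scalemxAl mxE. Qed.

Lemma bilZr q (M : 'M[R]_q) a x y : bil M x (a *: y) = a * bil M x y.
Proof. by rewrite /bil -scalemxAr mxE. Qed.

Lemma bilMD q (M N : 'M[R]_q) x y : bil (M + N) x y = bil M x y + bil N x y.
Proof. by rewrite /bil mulmxDr mulmxDl mxE. Qed.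

Lemma bilMN q (M : 'M[R]_q) x y : bil (- M) x y = - bil M x y.
Proof. by rewrite /bil mulmxN mulNmx mxE. Qed.

Lemma bilMZ q (M : 'M[R]_q) a x y : bil (a *: M) x y = a * bil M x y.
Proof. by rewrite /bil -scalemxAr -scalemxAl mxE. Qed.

Lemma bil_delta q (M : 'M[R]_q) i j : bil M (delta_mx i 0) (delta_mx j 0) = M i j.
Proof.
rewrite /bil mxE (bigD1 j) //= big1 ?addr0 => [|k kj]; last first.
  by rewrite [delta_mx _ _ _ _]mxE (negPf kj) mulr0.
rewrite [delta_mx _ _ _ _]mxE !eqxx mulr1 mxE (bigD1 i) //= big1 ?addr0 => [|k ki].
  by rewrite !mxE !eqxx mul1r.
by rewrite !mxE (negPf ki) mul0r.
Qed.

Lemma qf_outer q (u x : 'cV[R]_q) : qf (u *m u^T) x = (bil 1%:M u x) ^+ 2.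
Proof.
rewrite /qf /bil mulmx1.
have -> : x^T *m (u *m u^T) *m x = (x^T *m u) *m (u^T *m x) by rewrite !mulmxA.
rewrite mxE big_ord1 expr2; congr (_ * _).
by rewrite -[x^T *m u]trmxK trmx_mul trmxK mxE.
Qed.

Lemma bil_conj p q (M : 'M[R]_q) (X : 'M[R]_(p, q)) x y :
  bil (X *m M *m X^T) x y = bil M (X^T *m x) (X^T *m y).
Proof. by rewrite /bil trmx_mul trmxK !mulmxA. Qed.

Lemma qf_expand q (M : 'M[R]_q) a x y : M^T = M ->
  qf M (a *: x + y) = a ^+ 2 * qf M x + 2 * a * bil M x y + qf M y.
Proof.
move=> M_sym; rewrite /qf !bilDl !bilDr !bilZl !bilZr (bilC y x M_sym).
by rewrite expr2; ring.
Qed.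

Lemma qf_sum q (M : 'M[R]_q) y : qf M y = \sum_i y i 0 * (M *m y) i 0.
Proof. by rewrite /qf /bil -mulmxA mxE; apply: eq_bigr => i _; rewrite mxE. Qed.

Lemma qf_mxdiag M (l : 'I_M -> nat) (B : forall m : 'I_M, 'M[R]_(l m)) x :
  qf (\mxdiag_(m < M) B m) x = \sum_m qf (B m) (submxcol x m).
Proof.
rewrite /qf /bil -{1 2}(submxcolK x) tr_mxcol -mulmxA mul_mxdiag_mxcol mul_mxrow_mxcol.
by rewrite summxE; apply: eq_bigr => m _; rewrite mulmxA.
Qed.

End BilinearForms.

Section PositiveSemidefinite.
Variable R : realType.

Lemma psd_qf q (M : 'M[R]_q) x : psdmx M -> 0 <= qf M x.
Proof. by case=> _; apply. Qed.

Lemma pd_psd q (M : 'M[R]_q) : pdmx M -> psdmx M.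
Proof.
case=> M_sym M_pd; split => // x; have [->|x_neq0] := eqVneq x 0.
  by rewrite mulmx0 mxE.
exact/ltW/M_pd.
Qed.

Lemma psd_conj p q (X : 'M[R]_(p, q)) (M : 'M[R]_q) :
  psdmx M -> psdmx (X *m M *m X^T).
Proof.
case=> M_sym M_psd; split; first by rewrite !trmx_mul trmxK M_sym mulmxA.
by move=> x; have := M_psd (X^T *m x); rewrite trmx_mul trmxK !mulmxA.
Qed.

Lemma psdD q (M N : 'M[R]_q) : psdmx M -> psdmx N -> psdmx (M + N).
Proof.
case=> M_sym M_psd [N_sym N_psd]; split; first by rewrite linearD /= M_sym N_sym.
by move=> x; rewrite mulmxDr mulmxDl mxE addr_ge0.
Qed.

Lemma psd_diag_ge0 q (M : 'M[R]_q) i : psdmx M -> 0 <= M i i.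
Proof. by move=> M_psd; rewrite -bil_delta; exact: psd_qf. Qed.

Lemma psd_mxtrace_ge0 q (M : 'M[R]_q) : psdmx M -> 0 <= \tr M.
Proof. by move=> M_psd; apply: sumr_ge0 => i _; exact: psd_diag_ge0. Qed.

Lemma affine_ge0_slope0 (a b : R) : (forall t, 0 <= 2 * t * a + b) -> a = 0.
Proof.
move=> ge0; apply/eqP; apply: contraT => a_neq0.
have := ge0 (- (b + 1) / (2 * a)).
have -> : 2 * (- (b + 1) / (2 * a)) * a = - (b + 1) by field.
lra.
Qed.

Lemma psd_diag_eq0 q (M : 'M[R]_q) i j : psdmx M -> M i i = 0 -> M i j = 0.
Proof.
move=> M_psd Mii0; apply: (@affine_ge0_slope0 _ (qf M (delta_mx j 0))) => t.
have := psd_qf (t *: delta_mx i 0 + delta_mx j 0) M_psd.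
by rewrite qf_expand ?(M_psd.1) // /qf bil_delta Mii0 mulr0 add0r bil_delta.
Qed.

Lemma mxtrace_outer q (u : 'cV[R]_q) : \tr (u *m u^T) = vnorm2 u.
Proof. by apply: eq_bigr => i _; rewrite mxE big_ord1 !mxE expr2. Qed.

Definition schur_compl q (X : 'M[R]_q) i := X - (X i i)^-1 *: (col i X *m (col i X)^T).

Lemma psd_schur_compl q (X : 'M[R]_q) i : psdmx X -> 0 < X i i ->
  psdmx (schur_compl X i).
Proof.
move=> X_psd Xii_gt0; have X_sym := X_psd.1.
rewrite /schur_compl; set u := col i X; set c := X i i; split.
  by rewrite linearB /= linearZ /= trmx_mul trmxK X_sym.
move=> x; rewrite -/(bil _ x x) bilMD bilMN bilMZ [bil (_ *m _) _ _]qf_outer.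
set b := bil 1%:M u x.
have bE : bil X (delta_mx i 0) x = b by rewrite /b /bil /u colE mulmx1 trmx_mul X_sym.
have := psd_qf (- (b / c) *: delta_mx i 0 + x) X_psd.
rewrite qf_expand // /qf bil_delta bE -/c.
have -> : (- (b / c)) ^+ 2 * c + 2 * - (b / c) * b + bil X x x =
          bil X x x - c^-1 * b ^+ 2 by field; rewrite gt_eqF.
by [].
Qed.

Lemma schur_compl_diag q (X : 'M[R]_q) i j :
  schur_compl X i j j = X j j - (X i i)^-1 * X j i ^+ 2.
Proof. by rewrite !mxE big_ord1 !mxE expr2 mulrA. Qed.

Lemma schur_compl_support q (X : 'M[R]_q) i : psdmx X -> 0 < X i i ->
  (#|[pred j | schur_compl X i j j != 0%R]| < #|[pred j | X j j != 0%R]|)%N.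
Proof.
move=> X_psd Xii_gt0.
rewrite (cardD1 i [pred j | X j j != 0]) inE gt_eqF // add1n ltnS.
apply: subset_leq_card; apply/fintype.subsetP => j.
rewrite !inE schur_compl_diag => Sjj; apply/andP; split.
  by apply: contra_neq Sjj => ->; rewrite expr2 mulrA mulVf ?gt_eqF // mul1r subrr.
by apply: contra_neq Sjj => Xjj0; rewrite Xjj0 (psd_diag_eq0 _ X_psd Xjj0) expr0n mulr0 subrr.
Qed.

Lemma psd_diag0_eq0 q (X : 'M[R]_q) : psdmx X -> (forall i, X i i = 0) -> X = 0.
Proof.
by move=> X_psd diag0; apply/matrixP => i j; rewrite mxE (psd_diag_eq0 _ X_psd (diag0 i)).
Qed.

(* Every psd matrix is a nonnegative combination of outer products u u^T: peel
   one off with a Schur complement, which kills at least one diagonal entry. *)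
Lemma psd_outer_ind q (P : 'M[R]_q -> Prop) : P 0 ->
  (forall X (u : 'cV_q) c, psdmx X -> P X -> 0 <= c -> P (X + c *: (u *m u^T))) ->
  forall X, psdmx X -> P X.
Proof.
move=> P0 PD.
suff PN N X : psdmx X -> (#|[pred i | X i i != 0%R]| <= N)%N -> P X.
  by move=> X X_psd; exact: (PN _ X X_psd (leqnn _)).
elim: N X => [|N IH] X X_psd supp.
  suff -> : X = 0 by [].
  apply: psd_diag0_eq0 => // i; move: supp; rewrite leqn0 => /eqP/card0_eq/(_ i).
  by rewrite inE => /negbFE/eqP.
case: (pickP [pred i | X i i != 0]) => [i /= Xii | diag0]; last first.
  by rewrite (psd_diag0_eq0 X_psd) // => i; apply/eqP/negbFE/diag0.
have Xii_gt0 : 0 < X i i by rewrite lt_def Xii psd_diag_ge0.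
have -> : X = schur_compl X i + (X i i)^-1 *: (col i X *m (col i X)^T) by rewrite subrK.
apply: PD; [exact: psd_schur_compl | apply: IH; first exact: psd_schur_compl | ].
- by rewrite -ltnS (leq_trans (schur_compl_support X_psd Xii_gt0)).
- by rewrite invr_ge0 ltW.
Qed.

Lemma mxtrace_conj_le p q (A : 'M[R]_(p, q)) (X : 'M[R]_q) :
  psdmx X -> \tr (A *m X *m A^T) <= specnorm A ^+ 2 * \tr X.
Proof.
apply: (@psd_outer_ind q (fun X => \tr (A *m X *m A^T) <= specnorm A ^+ 2 * \tr X)).
  by rewrite mulmx0 mul0mx !linear0 mulr0.
move=> Y u c _ IH c_ge0.
rewrite mulmxDr mulmxDl !mxtraceD -scalemxAr -scalemxAl !mxtraceZ mulrDr.
apply: lerD => //; rewrite mulrCA ler_wpM2l //.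
have -> : A *m (u *m u^T) *m A^T = (A *m u) *m (A *m u)^T by rewrite trmx_mul !mulmxA.
by rewrite !mxtrace_outer vnorm2_mul_le.
Qed.

Lemma mxtrace_conj_mono p q (B : 'M[R]_(p, q)) (X Y : 'M[R]_q) :
  psdmx (Y - X) -> \tr (B *m X *m B^T) <= \tr (B *m Y *m B^T).
Proof.
move=> YX_psd; have := psd_mxtrace_ge0 (psd_conj B YX_psd).
by rewrite mulmxBr mulmxBl linearB /= subr_ge0.
Qed.

Lemma Rdiag_pd M (l : 'I_M -> nat) (B : forall m : 'I_M, 'M[R]_(l m)) :
  (forall m, pdmx (B m)) -> pdmx (Rdiag B).
Proof.
move=> B_pd; split.
  rewrite /Rdiag tr_mxdiag; congr (\mxdiag_i _).
  by apply: functional_extensionality_dep => i; case: (B_pd i).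
move=> x x_neq0; rewrite -/(bil _ x x) -/(qf _ x) qf_mxdiag.
have [[m xm_neq0]|xm0] := pselect (exists m, submxcol x m != 0); last first.
  case/negP: x_neq0; rewrite -(submxcolK x) -(@mxcol0 _ _ l 1); apply/eqP.
  congr (\mxcol_i _); apply: functional_extensionality_dep => i.
  by apply/eqP/negPn/negP => xi_neq0; apply: xm0; exists i.
rewrite (bigD1 m) //=; apply: ltr_pwDl; first by case: (B_pd m) => _; apply.
by apply: sumr_ge0 => i _; apply: psd_qf; exact: pd_psd.
Qed.

End PositiveSemidefinite.

Section KalmanUpdate.
Variable R : realType.
Variables (n L : nat) (P : 'M[R]_n) (C : 'M[R]_(L, n)) (Rr : 'M[R]_L).
Hypotheses (P_psd : psdmx P) (Rr_pd : pdmx Rr).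

Definition innov_cov := C *m P *m C^T + Rr.

Definition kalman_gain := P *m C^T *m invmx innov_cov.

Definition post_cov := P - kalman_gain *m C *m P.

Lemma innov_cov_pd : pdmx innov_cov.
Proof.
have [P_sym _] := P_psd; have [Rr_sym Rr_pos] := Rr_pd; split.
  by rewrite /innov_cov linearD /= !trmx_mul trmxK P_sym Rr_sym mulmxA.
move=> x x_neq0; rewrite -/(bil _ x x) /innov_cov bilMD bil_conj.
by apply: ltr_wpDl; [exact: (psd_qf _ P_psd) | exact: Rr_pos].
Qed.

Lemma innov_cov_unit : innov_cov \in unitmx.
Proof.
have [_ S_pos] := innov_cov_pd.
rewrite -row_free_unit -kermx_eq0; apply: contraT => /matrix0Pn [i [j Kij]].
set v := row i (kermx innov_cov).
have vS0 : v *m innov_cov = 0 by rewrite /v -row_mul mulmx_ker row0.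
have vT_neq0 : v^T != 0.
  apply: contra_neq Kij => v0.
  have : v^T j 0 = 0 by rewrite v0 mxE.
  by rewrite !mxE.
by have := S_pos _ vT_neq0; rewrite trmxK vS0 mul0mx mxE ltxx.
Qed.

Lemma joseph_expand (K : 'M[R]_(n, L)) :
  (1%:M - K *m C) *m P *m (1%:M - K *m C)^T + K *m Rr *m K^T =
  P - K *m C *m P - P *m C^T *m K^T + K *m innov_cov *m K^T.
Proof.
rewrite linearB /= trmx1 trmx_mul mulmxBl mul1mx mulmxBr mulmx1.
rewrite /innov_cov mulmxDr mulmxDl !mulmxA.
by rewrite !mulNmx mulmxDl ?mulmxA opprD opprK !addrA.
Qed.

Lemma post_cov_square (K : 'M[R]_(n, L)) :
  post_cov + (K - kalman_gain) *m innov_cov *m (K - kalman_gain)^T =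
  P - K *m C *m P - P *m C^T *m K^T + K *m innov_cov *m K^T.
Proof.
have S_unit := innov_cov_unit.
have Si_sym : (invmx innov_cov)^T = invmx innov_cov by rewrite trmx_inv innov_cov_pd.1.
have SSi k (Y : 'M[R]_(k, L)) k' (Z : 'M[R]_(L, k')) :
  Y *m innov_cov *m invmx innov_cov *m Z = Y *m Z by rewrite -(mulmxA Y) mulmxV // mulmx1.
have SiS k (Y : 'M[R]_(k, L)) k' (Z : 'M[R]_(L, k')) :
  Y *m invmx innov_cov *m innov_cov *m Z = Y *m Z by rewrite -(mulmxA Y) mulVmx // mulmx1.
rewrite linearB /= /kalman_gain !trmx_mul trmxK Si_sym P_psd.1.
rewrite mulmxBl !mulmxBr !mulmxBl !mulmxA !SSi !SiS /post_cov.
have zmodE (V : zmodType) (p x k u t : V) : p - x + (k - u - (t - x)) = p - t - u + k.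
  rewrite opprB !addrA (addrAC (p - x + k)) (addrAC (p - x)) addrNK.
  by rewrite [LHS]addrAC [RHS]addrAC (addrAC p (-t)).
exact: zmodE.
Qed.

Lemma post_cov_psd : psdmx post_cov.
Proof.
have := post_cov_square kalman_gain.
rewrite subrr mul0mx mul0mx addr0 => ->; rewrite -joseph_expand.
by apply: psdD; apply: psd_conj => //; exact: pd_psd.
Qed.

Lemma post_cov_le_prior : psdmx (P - post_cov).
Proof.
have := post_cov_square 0; rewrite !mul0mx trmx0 !mulmx0 !subr0 addr0 => <-.
by rewrite addrC addKr; apply: psd_conj; apply: pd_psd; exact: innov_cov_pd.
Qed.

Lemma post_cov_le_unbiased (K : 'M[R]_(n, L)) : K *m C = 1%:M ->
  psdmx (K *m Rr *m K^T - post_cov).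
Proof.
move=> KC1; have := post_cov_square K; rewrite -joseph_expand KC1 subrr.
rewrite mul0mx mul0mx add0r => <-.
by rewrite addrC addKr; apply: psd_conj; apply: pd_psd; exact: innov_cov_pd.
Qed.

End KalmanUpdate.

Definition riccati_step (R : realType) n L (A Q P : 'M[R]_n) (C : 'M[R]_(L, n))
    (Rr : 'M[R]_L) :=
  A *m P *m A^T + Q -
  (A *m P *m C^T *m invmx (C *m P *m C^T + Rr)) *m C *m P *m A^T.

Section RiccatiStep.
Variable R : realType.
Variables (n L : nat) (A Q P : 'M[R]_n) (C : 'M[R]_(L, n)) (Rr : 'M[R]_L).
Hypotheses (P_psd : psdmx P) (Q_psd : psdmx Q) (Rr_pd : pdmx Rr).

Lemma riccati_stepE : riccati_step A Q P C Rr = A *m post_cov P C Rr *m A^T + Q.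
Proof. by rewrite /riccati_step /post_cov /kalman_gain mulmxBr mulmxBl !mulmxA addrAC. Qed.

Lemma riccati_step_psd : psdmx (riccati_step A Q P C Rr).
Proof. by rewrite riccati_stepE; apply: psdD => //; apply: psd_conj; exact: post_cov_psd. Qed.

Lemma mxtrace_riccati_step_le :
  \tr (riccati_step A Q P C Rr) <= specnorm A ^+ 2 * \tr P + \tr Q.
Proof.
rewrite riccati_stepE mxtraceD lerD2r; apply: le_trans (mxtrace_conj_le A P_psd).
exact/mxtrace_conj_mono/post_cov_le_prior.
Qed.

Lemma mxtrace_riccati_step_le_unbiased (K : 'M[R]_(n, L)) : K *m C = 1%:M ->
  \tr (riccati_step A Q P C Rr) <= specnorm A ^+ 2 * \tr (K *m Rr *m K^T) + \tr Q.
Proof.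
move=> KC1; rewrite riccati_stepE mxtraceD lerD2r.
apply: le_trans (mxtrace_conj_le A (psd_conj K (pd_psd Rr_pd))).
exact/mxtrace_conj_mono/post_cov_le_unbiased.
Qed.

End RiccatiStep.

Section SpectralNormBounds.
Variable R : realType.

Lemma mul_le_amgm (t a b : R) : 0 < t -> a * b <= (t * a ^+ 2 + t^-1 * b ^+ 2) / 2.
Proof.
move=> t_gt0.
have -> : (t * a ^+ 2 + t^-1 * b ^+ 2) / 2 = a * b + t^-1 * (t * a - b) ^+ 2 / 2.
  by field; rewrite gt_eqF.
by rewrite lerDl divr_ge0 // mulr_ge0 ?sqr_ge0 // invr_ge0 ltW.
Qed.

Lemma qf_le_specnorm q (M : 'M[R]_q) y : qf M y <= specnorm M * vnorm2 y.
Proof.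
have My := vnorm2_mul_le M y; rewrite qf_sum.
have [s0|s_neq0] := eqVneq (specnorm M) 0.
  move: My; rewrite s0 expr2 !mul0r => My.
  have /vnorm2_eq0 -> : vnorm2 (M *m y) = 0 by apply/eqP; rewrite eq_le My vnorm2_ge0.
  by rewrite big1 // => i _; rewrite mxE mulr0.
set s := specnorm M in My s_neq0 *.
have s_gt0 : 0 < s by rewrite lt_def s_neq0 specnorm_ge0.
apply: le_trans (_ : (\sum_i (s * y i 0 ^+ 2 + s^-1 * (M *m y) i 0 ^+ 2)) / 2 <= _).
  by rewrite mulr_suml; apply: ler_sum => i _; exact: mul_le_amgm.
rewrite big_split /= -!mulr_sumr -/(vnorm2 y) -/(vnorm2 (M *m y)).
have : s^-1 * vnorm2 (M *m y) <= s * vnorm2 y by rewrite ler_pdivrMl // mulrA -expr2.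
by rewrite ler_pdivrMr // mulr_natr mulr2n lerD2l.
Qed.

Lemma mxtrace_le_specnorm q (M : 'M[R]_q) : \tr M <= q%:R * specnorm M.
Proof.
rewrite /mxtrace -[q in q%:R]card_ord -sum1_card natr_sum mulr_suml.
apply: ler_sum => i _; rewrite -bil_delta mul1r -/(qf _ _).
by apply: le_trans (qf_le_specnorm _ _) _; rewrite vnorm2_delta mulr1.
Qed.

End SpectralNormBounds.

Fixpoint riccati_majorant (R : realType) (r : nat -> bool) (a : nat -> R) (c v0 : R)
    (k : nat) : R :=
  if k is k'.+1 then
    (if r k' then c else a k' * riccati_majorant r a c v0 k' + c)
  else v0.

Lemma riccati_majorant_ext (R : realType) (r r' : nat -> bool) (a : nat -> R) c v0 k :
  (forall t, (t < k)%N -> r t = r' t) ->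
  riccati_majorant r a c v0 k = riccati_majorant r' a c v0 k.
Proof. by elim: k => [//|k IH] rr' /=; rewrite rr' // IH // => t /ltnW; exact: rr'. Qed.

Lemma riccati_majorant_ge0 (R : realType) (r : nat -> bool) (a : nat -> R) c v0 k :
  0 <= v0 -> 0 <= c -> (forall k, 0 <= a k) -> 0 <= riccati_majorant r a c v0 k.
Proof.
move=> v0_ge0 c_ge0 a_ge0; elim: k => [//|k IH] /=.
by case: (r k) => //; rewrite addr_ge0 ?mulr_ge0.
Qed.

Section RiccatiPath.
Variable R : realType.
Variables (n L : nat) (A Q : nat -> 'M[R]_n) (Cs : nat -> 'M[R]_(L, n))
  (Rs : nat -> 'M[R]_L) (P0 : 'M[R]_n).
Hypotheses (P0_psd : psdmx P0) (Q_psd : forall k, psdmx (Q k))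
  (Rs_pd : forall k, pdmx (Rs k)).

Lemma riccatiS k : riccati A Q Cs Rs P0 k.+1 =
  riccati_step (A k) (Q k) (riccati A Q Cs Rs P0 k) (Cs k) (Rs k).
Proof. by []. Qed.

Lemma riccati_ext (Cs' : nat -> 'M[R]_(L, n)) k :
  (forall t, (t < k)%N -> Cs t = Cs' t) ->
  riccati A Q Cs Rs P0 k = riccati A Q Cs' Rs P0 k.
Proof. by elim: k => [//|k IH] CC' /=; rewrite CC' // IH // => t /ltnW; exact: CC'. Qed.

Lemma riccati_psd k : psdmx (riccati A Q Cs Rs P0 k).
Proof. by elim: k => [//|k IH]; rewrite riccatiS; apply: riccati_step_psd. Qed.

Lemma mxtrace_riccati_le_majorant (r : nat -> bool) (K : nat -> 'M[R]_(n, L)) (c : R) :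
  (forall k, r k -> K k *m Cs k = 1%:M) ->
  (forall k, r k -> specnorm (A k) ^+ 2 * \tr (K k *m Rs k *m (K k)^T) + \tr (Q k) <= c) ->
  (forall k, \tr (Q k) <= c) ->
  forall k, \tr (riccati A Q Cs Rs P0 k) <=
    riccati_majorant r (fun k => specnorm (A k) ^+ 2) c (\tr P0) k.
Proof.
move=> KC1 cK cQ; elim => [//|k IH]; rewrite riccatiS /=.
case rk: (r k).
  apply: le_trans (cK k rk).
  exact: mxtrace_riccati_step_le_unbiased (riccati_psd k) (Rs_pd k) _ (KC1 k rk).
apply: le_trans (mxtrace_riccati_step_le _ _ _ (riccati_psd k) (Rs_pd k)) _.
by rewrite lerD ?ler_wpM2l ?sqr_ge0.
Qed.

End RiccatiPath.

Section Histories.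
Variables (R : realType) (d : measure_display) (Omega : measurableType d)
  (Pr : probability Omega R) (B : finType) (M : nat)
  (Xi : nat -> Omega -> B) (gamma : nat -> 'I_M -> Omega -> bool).
Hypothesis Xi_meas : forall k (j : B), measurable [set w | Xi k w = j].
Hypothesis gamma_meas : forall k (m : 'I_M), measurable [set w | gamma k m w].

Local Notation Obs := (B * {ffun 'I_M -> bool})%type.
Variable x0 : Obs.

Fixpoint histories (k : nat) : seq (seq Obs) :=
  if k is k'.+1 then [seq rcons h x | h <- histories k', x <- enum {: Obs}] else [:: [::]].

Lemma historiesS k :
  histories k.+1 = [seq rcons h x | h <- histories k, x <- enum {: Obs}].
Proof. by []. Qed.

Lemma mem_histories k h : (h \in histories k) = (size h == k).
Proof.
elim: k h => [|k IH] h /=.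
  by rewrite inE; case: h.
apply/allpairsP/idP => [[[h' x] /= [h1 _ ->]]|].
  by rewrite size_rcons eqSS -IH.
case/lastP: h => [//|h' x]; rewrite size_rcons eqSS => hs.
by exists (h', x); rewrite /= IH hs mem_enum.
Qed.

Lemma histories_uniq k : uniq (histories k).
Proof.
elim: k => [//|k IH] /=.
apply: allpairs_uniq => //; first exact: enum_uniq.
move=> [h x] [h' x'] _ _ /= e.
by have [-> ->] := (rcons_inj e).
Qed.

Definition obs t w : Obs := (Xi t w, [ffun m => gamma t m w]).

Definition history k w : seq Obs := mkseq (fun t => obs t w) k.

Definition hist_event (h : seq Obs) : set Omega :=
  [set w | forall t, (t < size h)%N -> nth x0 h t = obs t w].

Lemma hist_eventP k h w : size h = k -> (hist_event h w <-> h = history k w).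
Proof.
move=> hs; split => [hE|->].
  apply: (@eq_from_nth _ x0); first by rewrite size_mkseq.
  by move=> t ht; rewrite hE // nth_mkseq // -hs.
by move=> t; rewrite size_mkseq => ht; rewrite nth_mkseq.
Qed.

Lemma measurable_link t m b : measurable [set w | gamma t m w = b].
Proof.
case: b; first exact: gamma_meas.
rewrite (_ : [set w | _ = false] = ~` [set w | gamma t m w]); first exact: measurableC.
by apply/seteqP; split => w /=; case: (gamma t m w).
Qed.

Lemma measurable_obs t x : measurable [set w | x = obs t w].
Proof.
rewrite (_ : [set w | _] = [set w | Xi t w = x.1] `&`
                          \bigcap_(m in [set: 'I_M]) [set w | gamma t m w = x.2 m]).
  apply: measurableI => //; apply: fin_bigcap_measurable => [|m _]; first exact: finite_finset.
  exact: measurable_link.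
apply/seteqP; split => w /=; first by move=> ->; split => // m _; rewrite ffunE.
case: x => b g /= [<- gm]; congr pair; apply/ffunP => m; rewrite ffunE gm //.
Qed.

Lemma measurable_hist_event h : measurable (hist_event h).
Proof. by apply: bigcap_measurableType => t _; exact: measurable_obs. Qed.

Definition hist_prob h : R := fine (Pr (hist_event h)).

Lemma hist_probE h : Pr (hist_event h) = (hist_prob h)%:E.
Proof. rewrite /hist_prob fineK //; apply: fin_num_measure; exact: measurable_hist_event. Qed.

Lemma hist_prob_ge0 h : 0 <= hist_prob h.
Proof. by rewrite /hist_prob fine_ge0 // measure_ge0. Qed.

Definition hist_mean k (F : seq Obs -> R) := \sum_(h <- histories k) hist_prob h * F h.

Lemma integral_history k (F : seq Obs -> R) : (forall h, 0 <= F h) ->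
  (\int[Pr]_w (F (history k w))%:E = (hist_mean k F)%:E)%E.
Proof.
move=> F_ge0.
have F_indic w : (F (history k w))%:E =
    (\sum_(h <- histories k) (F h * \1_(hist_event h) w)%:E)%E.
  rewrite sumEFin; congr EFin.
  have hk : history k w \in histories k by rewrite mem_histories size_mkseq.
  rewrite (bigD1_seq (history k w)) ?histories_uniq //= big_seq_cond big1 ?addr0.
    by rewrite indicE mem_set ?mulr1 //; apply/(hist_eventP _ (size_mkseq _ _)).
  move=> h /andP [+ /eqP h_neq]; rewrite mem_histories => /eqP hk'.
  by rewrite indicE memNset ?mulr0 // => /(hist_eventP _ hk').
under eq_integral => w _ do rewrite F_indic.
rewrite ge0_integral_sum //; last first.
- by move=> h w _; rewrite lee_fin mulr_ge0 // indicE ler0n.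
- move=> h; apply/measurable_realfun.measurable_EFinP.
  apply: measurable_realfun.measurable_funM; first exact: measurable_cst.
  exact: measurable_realfun.measurable_indic (measurable_hist_event h).
rewrite -sumEFin; apply: eq_bigr => h _.
have Fh_neg : F h < 0 -> hist_event h = set0 by rewrite ltNge F_ge0.
have Eh := measurable_hist_event h.
rewrite (integralZl_indic measurableT (fun _ => hist_event h) (F h) Fh_neg Eh).
rewrite integral_indic // (_ : hist_event h `&` _ = hist_event h); last exact: setIT.
by rewrite mulrC EFinM; congr (_ * _)%E; exact: hist_probE.
Qed.

Lemma hist_mean1 k : hist_mean k (fun _ => 1) = 1.
Proof.
apply: EFin_inj; rewrite -(integral_history k (F := fun _ => 1)) // integral_cst //.
by rewrite mul1e; exact: probability_setT.
Qed.

Lemma hist_mean_mono k (F G : seq Obs -> R) : (forall h, F h <= G h) ->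
  hist_mean k F <= hist_mean k G.
Proof. by move=> FG; apply: ler_sum => h _; rewrite ler_wpM2l ?hist_prob_ge0. Qed.

Lemma hist_mean_le k (V : seq Obs -> R) b : (forall h, h \in histories k -> V h <= b) ->
  hist_mean k V <= b.
Proof.
move=> V_le; rewrite -[b]mul1r -(hist_mean1 k) /hist_mean mulr_suml.
rewrite big_seq_cond [X in _ <= X]big_seq_cond; apply: ler_sum => h /andP [hk _].
by rewrite mulr1 ler_wpM2l ?hist_prob_ge0 ?V_le.
Qed.

Variables (p : B -> B -> R) (phi : 'I_M -> B -> R).
Hypothesis Xi_markov : forall (K : nat) (xi : nat -> B),
  Pr [set w | forall t, (t <= K.+1)%N -> Xi t w = xi t] =
  (Pr [set w | forall t, (t <= K)%N -> Xi t w = xi t] * (p (xi K) (xi K.+1))%:E)%E.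
Hypothesis gamma_cond : forall (K : nat) (xi : nat -> B) (g : nat -> 'I_M -> bool),
  Pr [set w | forall t, (t <= K)%N ->
                Xi t w = xi t /\ forall m : 'I_M, gamma t m w = g t m] =
  (Pr [set w | forall t, (t <= K)%N -> Xi t w = xi t] *
   (\prod_(t < K.+1) \prod_(m < M) bern (g t m) (phi m (xi t)))%:E)%E.

Definition hist_state (h : seq Obs) t := (nth x0 h t).1.

Definition link_prob (x : Obs) := \prod_(m < M) bern (x.2 m) (phi m x.1).

Definition state_event K (xi : nat -> B) := [set w | forall t, (t <= K)%N -> Xi t w = xi t].

Definition state_prob K xi : R := fine (Pr (state_event K xi)).

Lemma state_probE K xi : Pr (state_event K xi) = (state_prob K xi)%:E.
Proof.
rewrite /state_prob fineK //; apply: fin_num_measure.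
by apply: bigcap_measurableType => t _; exact: Xi_meas.
Qed.

Lemma state_probS K xi : state_prob K.+1 xi = state_prob K xi * p (xi K) (xi K.+1).
Proof. by apply: EFin_inj; rewrite EFinM -!state_probE; exact: Xi_markov. Qed.

Lemma state_prob_ext K xi xi' : (forall t, (t <= K)%N -> xi t = xi' t) ->
  state_prob K xi = state_prob K xi'.
Proof.
move=> xixi'; congr (fine (Pr _)); apply/seteqP.
by split => w /= Xixi t tK; [rewrite -xixi' ?Xixi | rewrite xixi' ?Xixi].
Qed.

Lemma hist_prob_factor h K : size h = K.+1 ->
  hist_prob h = state_prob K (hist_state h) * \prod_(t < K.+1) link_prob (nth x0 h t).
Proof.
move=> hs; apply: EFin_inj; rewrite EFinM -state_probE -hist_probE.
rewrite -(gamma_cond K _ (fun t m => (nth x0 h t).2 m)); congr (Pr _).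
apply/seteqP; split => w /= hE t.
  move=> tK; have := hE t; rewrite hs ltnS /hist_state => /(_ tK) ->.
  by split => // m; rewrite ffunE.
rewrite hs ltnS => tK; have [Xit gammat] := hE t tK.
rewrite /obs Xit /hist_state; case: (nth x0 h t) gammat => b g /= gammat.
by congr pair; apply/ffunP => m; rewrite ffunE gammat.
Qed.

Lemma hist_prob_rcons h x K : size h = K.+1 ->
  hist_prob (rcons h x) = hist_prob h * (p (hist_state h K) x.1 * link_prob x).
Proof.
move=> hs; have hs' : size (rcons h x) = K.+2 by rewrite size_rcons hs.
have nth_h t : (t <= K)%N -> nth x0 (rcons h x) t = nth x0 h t.
  by move=> tK; rewrite nth_rcons hs ltnS tK.
have nth_x : nth x0 (rcons h x) K.+1 = x by rewrite nth_rcons hs ltnn eqxx.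
have prod_h : \prod_(t < K.+1) link_prob (nth x0 (rcons h x) t) =
              \prod_(t < K.+1) link_prob (nth x0 h t).
  by apply: eq_bigr => t _; rewrite nth_h // -ltnS.
rewrite (hist_prob_factor hs') (hist_prob_factor hs) state_probS big_ord_recr /= prod_h.
rewrite (@state_prob_ext K _ (hist_state h)) => [|t tK]; last by rewrite /hist_state nth_h.
by rewrite /hist_state nth_x nth_h //; ring.
Qed.

Hypothesis p_ge0 : forall i j, 0 <= p i j.
Hypothesis p_sum1 : forall i, \sum_(j : B) p i j = 1.
Hypothesis phi_prob : forall m j, 0 <= phi m j <= 1.

Lemma link_prob_ge0 x : 0 <= link_prob x.
Proof.
apply: prodr_ge0 => m _; have /andP [phi_ge0 phi_le1] := phi_prob m x.1.
by rewrite /bern; case: (x.2 m); rewrite ?subr_ge0.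
Qed.

Lemma sum_link_prob j : \sum_(g : {ffun 'I_M -> bool}) link_prob (j, g) = 1.
Proof.
rewrite /link_prob /= -(bigA_distr_bigA (fun m b => bern b (phi m j))) /=.
by apply: big1 => m _; rewrite big_bool /bern /= addrC subrK.
Qed.

Lemma sum_obs (F : Obs -> R) :
  \sum_(x <- enum {: Obs}) F x = \sum_(j : B) \sum_(g : {ffun 'I_M -> bool}) F (j, g).
Proof.
rewrite big_enum /= (eq_bigr (fun x => F (x.1, x.2))); last by case.
by rewrite -(pair_bigA _ (fun j g => F (j, g))).
Qed.

Lemma sum_trans_link_prob i : \sum_(x <- enum {: Obs}) p i x.1 * link_prob x = 1.
Proof.
rewrite sum_obs /= -[RHS](p_sum1 i); apply: eq_bigr => j _.
by rewrite -mulr_sumr sum_link_prob mulr1.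
Qed.

Variable full_rank : {ffun 'I_M -> bool} -> bool.

(* [nu_of i] is nu_i with "C(k) has full column rank" abstracted as [full_rank]. *)
Definition nu_of i := \sum_(j : B) p i j *
  \sum_(g : {ffun 'I_M -> bool} | ~~ full_rank g) \prod_(m < M) bern (g m) (phi m j).

Lemma sum_trans_link_prob_deficient i :
  \sum_(x <- enum {: Obs}) p i x.1 * link_prob x * (~~ full_rank x.2)%:R = nu_of i.
Proof.
rewrite sum_obs /=; apply: eq_bigr => j _.
rewrite mulr_sumr [in RHS]big_mkcond /=; apply: eq_bigr => g _.
by case: (full_rank g); rewrite ?mulr0 ?mulr1.
Qed.

Variables (a : nat -> R) (rho c : R).
Hypotheses (a_ge0 : forall k, 0 <= a k) (nu_a_le : forall i k, nu_of i * a k <= rho).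
Hypothesis rho_ge0 : 0 <= rho.

Section Majorant.
Variable V : seq Obs -> R.
Hypothesis V_ge0 : forall h, 0 <= V h.
Hypothesis V_rcons : forall k h x, size h = k ->
  V (rcons h x) <= c + (~~ full_rank x.2)%:R * (a k * V h).

Lemma hist_mean_step k : (0 < k)%N -> hist_mean k.+1 V <= c + rho * hist_mean k V.
Proof.
case: k => [//|K] _; rewrite /hist_mean (historiesS K.+1) big_allpairs_dep.
rewrite -[c]mulr1 -(hist_mean1 K.+1) /hist_mean mulr_sumr mulr_sumr -big_split /=.
rewrite big_seq_cond [X in _ <= X]big_seq_cond; apply: ler_sum => h /andP [hk _].
have hs : size h = K.+1 by move: hk; rewrite -historiesS mem_histories => /eqP.
set i := hist_state h K.
apply: le_trans (_ : \sum_(x <- enum {: Obs}) hist_prob h * (p i x.1 * link_prob x) *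
    (c + (~~ full_rank x.2)%:R * (a K.+1 * V h)) <= _).
  apply: ler_sum => x _; rewrite (hist_prob_rcons _ hs) ler_wpM2l ?V_rcons //.
  by rewrite !mulr_ge0 ?hist_prob_ge0 ?link_prob_ge0.
have -> : \sum_(x <- enum {: Obs}) hist_prob h * (p i x.1 * link_prob x) *
    (c + (~~ full_rank x.2)%:R * (a K.+1 * V h)) =
  hist_prob h * c * (\sum_(x <- enum {: Obs}) p i x.1 * link_prob x) +
  hist_prob h * (a K.+1 * V h) *
    (\sum_(x <- enum {: Obs}) p i x.1 * link_prob x * (~~ full_rank x.2)%:R).
  by rewrite !mulr_sumr -big_split /=; apply: eq_bigr => x _; ring.
rewrite sum_trans_link_prob sum_trans_link_prob_deficient !mulr1 [c * _]mulrC lerD2l.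
rewrite -mulrA [rho * _]mulrCA ler_wpM2l ?hist_prob_ge0 //.
by rewrite mulrAC [_ * nu_of i]mulrC ler_wpM2r.
Qed.

Lemma hist_mean_bounded (b : R) :
  c + a 0 * V [::] <= b -> c + rho * b <= b -> forall k, hist_mean k.+1 V <= b.
Proof.
move=> b_init b_step; elim=> [|k IH].
  apply: hist_mean_le => h; rewrite mem_histories; case/lastP: h => [//|h x].
  rewrite size_rcons eqSS => /eqP /size0nil ->.
  apply: le_trans (@V_rcons 0%N [::] x erefl) (le_trans _ b_init); rewrite lerD2l.
  by case: (full_rank x.2); rewrite ?mul1r ?mul0r ?mulr_ge0.
apply: le_trans (hist_mean_step (ltn0Sn k)) (le_trans _ b_step).
by rewrite lerD2l ler_wpM2l.
Qed.

End Majorant.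

End Histories.

Section SensorNetwork.
Variables (R : realType) (d : measure_display) (Omega : measurableType d)
  (Pr : probability Omega R) (n M : nat) (l : 'I_M -> nat)
  (A Q : nat -> 'M[R]_n) (P0 : 'M[R]_n) (C : forall m : 'I_M, 'M[R]_(l m, n))
  (Rm : nat -> forall m : 'I_M, 'M[R]_(l m)) (par : 'I_M -> option 'I_M)
  (B : finType) (p : B -> B -> R) (phi : 'I_M -> B -> R)
  (Xi : nat -> Omega -> B) (gamma : nat -> 'I_M -> Omega -> bool) (cA cQ cR rho : R).
Hypotheses (A_bnd : forall k, specnorm (A k) <= cA) (Q_bnd : forall k, specnorm (Q k) <= cQ)
  (Rm_bnd : forall k m, specnorm (Rm k m) <= cR).
Hypotheses (P0_psd : psdmx P0) (Q_psd : forall k, psdmx (Q k))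
  (Rm_pd : forall k m, pdmx (Rm k m)).
Hypotheses (Xi_meas : forall k j, measurable [set w | Xi k w = j])
  (gamma_meas : forall k m, measurable [set w | gamma k m w]).
Hypotheses (p_ge0 : forall i j, 0 <= p i j) (p_sum1 : forall i, \sum_(j : B) p i j = 1)
  (phi_prob : forall m j, 0 <= phi m j <= 1).
Hypothesis Xi_markov : forall (K : nat) (xi : nat -> B),
  Pr [set w | forall t, (t <= K.+1)%N -> Xi t w = xi t] =
  (Pr [set w | forall t, (t <= K)%N -> Xi t w = xi t] * (p (xi K) (xi K.+1))%:E)%E.
Hypothesis gamma_cond : forall (K : nat) (xi : nat -> B) (g : nat -> 'I_M -> bool),
  Pr [set w | forall t, (t <= K)%N ->
                Xi t w = xi t /\ forall m : 'I_M, gamma t m w = g t m] =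
  (Pr [set w | forall t, (t <= K)%N -> Xi t w = xi t] *
   (\prod_(t < K.+1) \prod_(m < M) bern (g t m) (phi m (xi t)))%:E)%E.
Hypotheses (rho_ge0 : 0 <= rho) (rho_lt1 : rho < 1)
  (nu_le : forall i k, nu C par p phi i * specnorm (A k) ^+ 2 <= rho).

Local Notation link_pattern := {ffun 'I_M -> bool}.

Definition obs_mx (g : link_pattern) := Cstack C (theta par g).

Definition full_rank g := row_full (obs_mx g).

Lemma mxtrace_Q_le k : \tr (Q k) <= n%:R * `|cQ|.
Proof.
apply: le_trans (mxtrace_le_specnorm _) _.
by rewrite ler_wpM2l // (le_trans (Q_bnd k)) ?ler_norm.
Qed.

Definition noise_trace_bound := \sum_(m < M) (l m)%:R * `|cR|.

Lemma noise_trace_bound_ge0 : 0 <= noise_trace_bound.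
Proof. by apply: sumr_ge0 => m _; rewrite mulr_ge0. Qed.

Lemma mxtrace_Rdiag_le k : \tr (Rdiag (Rm k)) <= noise_trace_bound.
Proof.
rewrite /Rdiag mxtrace_mxdiag; apply: ler_sum => m _.
apply: le_trans (mxtrace_le_specnorm _) _.
by rewrite ler_wpM2l // (le_trans (Rm_bnd k m)) ?ler_norm.
Qed.

Definition gain_bound := \sum_(g : link_pattern)
  specnorm (pinvmx (obs_mx g)) ^+ 2 * noise_trace_bound.

Lemma gain_bound_ge0 : 0 <= gain_bound.
Proof.
by apply: sumr_ge0 => g _; rewrite mulr_ge0 ?sqr_ge0 ?noise_trace_bound_ge0.
Qed.

Lemma mxtrace_gain_le g k :
  \tr (pinvmx (obs_mx g) *m Rdiag (Rm k) *m (pinvmx (obs_mx g))^T) <= gain_bound.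
Proof.
have Rk_psd : psdmx (Rdiag (Rm k)) by apply/pd_psd/Rdiag_pd.
apply: le_trans (mxtrace_conj_le _ Rk_psd) _.
apply: le_trans (ler_wpM2l (sqr_ge0 _) (mxtrace_Rdiag_le k)) _.
rewrite /gain_bound (bigD1 g) //= lerDl; apply: sumr_ge0 => g' _.
by rewrite mulr_ge0 ?sqr_ge0 ?noise_trace_bound_ge0.
Qed.

Definition step_bound := cA ^+ 2 * gain_bound + n%:R * `|cQ|.

Lemma step_bound_ge0 : 0 <= step_bound.
Proof.
by apply: addr_ge0; apply: mulr_ge0; rewrite ?sqr_ge0 ?gain_bound_ge0 ?ler0n ?normr_ge0.
Qed.

Lemma specnorm_A_sqr_le k : specnorm (A k) ^+ 2 <= cA ^+ 2.
Proof.
by rewrite ler_pXn2r ?nnegrE ?specnorm_ge0 ?(le_trans (specnorm_ge0 (A k))).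
Qed.

(* Default entry for [nth] on histories; it is never read. *)
Let x0 : B * link_pattern := (Xi 0%N point, [ffun=> false]).

Definition hist_riccati (h : seq (B * link_pattern)) :=
  riccati A Q (fun t => obs_mx (nth x0 h t).2) (fun t => Rdiag (Rm t)) P0 (size h).

Definition hist_majorant (h : seq (B * link_pattern)) :=
  riccati_majorant (fun t => full_rank (nth x0 h t).2) (fun k => specnorm (A k) ^+ 2)
    step_bound (\tr P0) (size h).

Lemma mxtrace_hist_riccati_le h : \tr (hist_riccati h) <= hist_majorant h.
Proof.
apply: (mxtrace_riccati_le_majorant P0_psd Q_psd _
          (fun k (fk : full_rank (nth x0 h k).2) => mulVpmx fk)).
- by move=> k; apply: Rdiag_pd.
- move=> k _; rewrite lerD ?mxtrace_Q_le //.
  rewrite ler_pM ?sqr_ge0 ?mxtrace_gain_le ?specnorm_A_sqr_le //.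
  exact/psd_mxtrace_ge0/psd_conj/pd_psd/Rdiag_pd.
- move=> k; apply: le_trans (mxtrace_Q_le k) _.
  by rewrite lerDr mulr_ge0 ?sqr_ge0 ?gain_bound_ge0.
Qed.

Lemma hist_majorant_rcons k h x : size h = k ->
  hist_majorant (rcons h x) <=
  step_bound + (~~ full_rank x.2)%:R * (specnorm (A k) ^+ 2 * hist_majorant h).
Proof.
move=> hk; rewrite /hist_majorant size_rcons /= nth_rcons ltnn eqxx.
rewrite (riccati_majorant_ext _ _ _ (r' := fun t => full_rank (nth x0 h t).2)).
  by rewrite hk; case: (full_rank x.2); rewrite /= ?mul0r ?addr0 ?mul1r // addrC.
by move=> t th; rewrite nth_rcons th.
Qed.

Lemma riccati_history k w :
  riccati A Q (fun t => Cstack C (theta par (gamma t ^~ w))) (fun t => Rdiag (Rm t)) P0 k =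
  hist_riccati (history Xi gamma k w).
Proof.
rewrite /hist_riccati size_mkseq; apply: riccati_ext => t tk.
rewrite nth_mkseq //= /obs_mx; congr (Cstack C _); apply: funext => m.
by apply: eq_forallb => m'; rewrite ffunE.
Qed.

Lemma hist_majorant_ge0 h : 0 <= hist_majorant h.
Proof.
apply: riccati_majorant_ge0 => [||k]; [exact: psd_mxtrace_ge0 | exact: step_bound_ge0 |].
exact: sqr_ge0.
Qed.

Lemma expected_trace_bounded : exists b, forall k,
  (\int[Pr]_w (\tr (riccati A Q (fun t => Cstack C (theta par (gamma t ^~ w)))
                     (fun t => Rdiag (Rm t)) P0 k))%:E <= b%:E)%E.
Proof.
have trP0_ge0 := psd_mxtrace_ge0 P0_psd; have c_ge0 := step_bound_ge0.
have cA2_ge0 : 0 <= cA ^+ 2 := sqr_ge0 cA.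
pose s := step_bound + (cA ^+ 2 + 1) * \tr P0; pose b := s / (1 - rho).
have s_le_b : s <= b.
  by rewrite ler_pdivlMr ?subr_gt0 // ler_piMr ?lerBlDr ?lerDl //; rewrite /s; nra.
have b_step : step_bound + rho * b <= b.
  have bE : s + rho * b = b by rewrite /b; field; rewrite subr_eq0 gt_eqF.
  by rewrite -[X in _ <= X]bE lerD2r /s lerDl mulr_ge0 ?addr_ge0.
have tr_ge0 h : 0 <= \tr (hist_riccati h).
  by apply: psd_mxtrace_ge0; apply: riccati_psd => // t; exact: Rdiag_pd.
exists b => k; under eq_integral do rewrite riccati_history.
rewrite (integral_history Pr Xi_meas gamma_meas x0 k tr_ge0) lee_fin.
apply: le_trans (hist_mean_mono _ _ _ _ _ mxtrace_hist_riccati_le) _.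
case: k => [|k].
  apply: hist_mean_le => // h; rewrite mem_histories => /eqP/size0nil -> /=.
  by apply: le_trans s_le_b; rewrite /s; nra.
apply: (hist_mean_bounded Xi_meas gamma_meas x0 Xi_markov gamma_cond p_ge0 p_sum1 phi_prob
          (full_rank := full_rank) (fun k => sqr_ge0 _) nu_le rho_ge0 hist_majorant_ge0
          hist_majorant_rcons) => //.
apply: le_trans s_le_b; have := specnorm_A_sqr_le 0; rewrite /s /hist_majorant /=; nra.
Qed.

End SensorNetwork.

Unset Implicit Arguments.

Theorem theorem1
  (R : realType) (d : measure_display) (Omega : measurableType d)
  (Pr : probability Omega R)
  (n M : nat) (l : 'I_M -> nat)
  (A Q : nat -> 'M[R]_n) (P0 : 'M[R]_n)
  (C : forall m : 'I_M, 'M[R]_(l m, n))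
  (Rm : nat -> forall m : 'I_M, 'M[R]_(l m))
  (par : 'I_M -> option 'I_M)
  (B : finType) (p : B -> B -> R) (phi : 'I_M -> B -> R)
  (Xi : nat -> Omega -> B) (gamma : nat -> 'I_M -> Omega -> bool) :
  is_tree par ->
  (exists c : R, forall k, specnorm (A k) <= c) ->
  (exists c : R, forall k, specnorm (Q k) <= c) ->
  (exists c : R, forall k (m : 'I_M), specnorm (Rm k m) <= c) ->
  psdmx P0 -> (forall k, psdmx (Q k)) -> (forall k (m : 'I_M), pdmx (Rm k m)) ->
  (forall k (j : B), measurable [set w | Xi k w = j]) ->
  (forall k (m : 'I_M), measurable [set w | gamma k m w]) ->
  (forall i j, 0 <= p i j) -> (forall i, \sum_(j : B) p i j = 1) ->
  (forall (K : nat) (xi : nat -> B),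
     Pr [set w | forall t, (t <= K.+1)%N -> Xi t w = xi t] =
     (Pr [set w | forall t, (t <= K)%N -> Xi t w = xi t] * (p (xi K) (xi K.+1))%:E)%E) ->
  (forall m j, 0 <= phi m j <= 1) ->
  (forall (K : nat) (xi : nat -> B) (g : nat -> 'I_M -> bool),
     Pr [set w | forall t, (t <= K)%N ->
                   Xi t w = xi t /\ forall m : 'I_M, gamma t m w = g t m] =
     (Pr [set w | forall t, (t <= K)%N -> Xi t w = xi t] *
      (\prod_(t < K.+1) \prod_(m < M) bern (g t m) (phi m (xi t)))%:E)%E) ->
  (exists rho : R, 0 <= rho < 1 /\
     forall (i : B) (k : nat), nu C par p phi i * specnorm (A k) ^+ 2 <= rho) ->
  exists alpha beta rho' : R, 0 <= rho' < 1 /\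
    forall k : nat,
      (\int[Pr]_w (\tr (riccati A Q
                          (fun t => Cstack C (theta par (gamma t ^~ w)))
                          (fun t => Rdiag (Rm t)) P0 k))%:E
       <= (alpha * rho' ^+ k + beta)%:E)%E.
Proof.
(* The routing tree enters only through [theta]: the argument never uses [is_tree]. *)
move=> _ [cA A_bnd] [cQ Q_bnd] [cR Rm_bnd] P0_psd Q_psd Rm_pd Xi_meas gamma_meas
  p_ge0 p_sum1 Xi_markov phi_prob gamma_cond [rho [/andP [rho_ge0 rho_lt1] nu_le]].
have [b trace_le] := expected_trace_bounded A_bnd Q_bnd Rm_bnd P0_psd Q_psd Rm_pd
  Xi_meas gamma_meas p_ge0 p_sum1 phi_prob Xi_markov gamma_cond rho_ge0 rho_lt1 nu_le.
exists 0, b, 0; split=> [|k]; first by rewrite lexx ltr01.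
by rewrite mul0r add0r; exact: trace_le.
Qed.
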